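(* Let $J$ be a Jordan algebra with unit element $1$ over a field $F$ of characteristic $\neq 2,3$, and let $d$ be a derivation with invertible values of $J$. Let $M$ be the sum of all ideals of $J$ contained in $\ker(d)$. Then $M$ is the largest proper ideal of $J$ (it contains every proper ideal of $J$), the map $\bar d: J/M \to J/M$, $\bar d(j+M) = d(j)+M$, is a well-defined derivation with invertible values of $J/M$, and $J/M$ is a simple Jordan algebra (its only ideals are $0$ and $J/M$).
   Context: A Jordan algebra is a commutative algebra satisfying $(x^2,y,x)=0$, where $(a,b,c)=(ab)c-a(bc)$. In a Jordan algebra $J$ with unit $1$, an element $x$ is invertible if there exists $y \in J$ with $xy = 1$ and $x^2 y = x$. A derivation with invertible values of $J$ is a nonzero derivation $d$ of $J$ such that for every $x \in J$, $d(x)$ is either invertible or equal to $0$. *)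

From HB Require Import structures.
From mathcomp Require Import all_boot all_order all_algebra.
Set Implicit Arguments. Unset Strict Implicit. Unset Printing Implicit Defensive.
Import Order.TTheory GRing.Theory Num.Theory.
Local Open Scope ring_scope.

Section Jordan.
Variables (F : fieldType) (V : lmodType F).

Definition char_not_2_3 : Prop := (2%:R : F) != 0 /\ (3%:R : F) != 0.

Definition bilinear_mul (mul : V -> V -> V) : Prop :=
  (forall (a : F) (x y z : V), mul (a *: x + y) z = a *: mul x z + mul y z) /\
  (forall (a : F) (x y z : V), mul z (a *: x + y) = a *: mul z x + mul z y).

Definition assoc_jordan (mul : V -> V -> V) (a b c : V) : V :=
  mul (mul a b) c - mul a (mul b c).

Definition unital_jordan_algebra (mul : V -> V -> V) (one : V) : Prop :=
  [/\ bilinear_mul mul,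
      (forall x y, mul x y = mul y x),
      (forall x y, assoc_jordan mul (mul x x) y x = 0),
      (forall x, mul one x = x) & (forall x, mul x one = x)].

Definition jinvertible (mul : V -> V -> V) (one : V) (x : V) : Prop :=
  exists y, mul x y = one /\ mul (mul x x) y = x.

Definition jderivation (mul : V -> V -> V) (d : V -> V) : Prop :=
  (forall (a : F) (x y : V), d (a *: x + y) = a *: d x + d y) /\
  (forall x y, d (mul x y) = mul (d x) y + mul x (d y)).

Definition DIV (mul : V -> V -> V) (one : V) (d : V -> V) : Prop :=
  [/\ jderivation mul d, (exists x, d x != 0) &
      (forall x, jinvertible mul one (d x) \/ d x = 0)].

Definition jideal (mul : V -> V -> V) (I : V -> Prop) : Prop :=
  [/\ I 0, (forall x y, I x -> I y -> I (x + y)),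
      (forall (a : F) x, I x -> I (a *: x)) &
      (forall x y, I x -> I (mul x y) /\ I (mul y x))].

Definition jproper_ideal (mul : V -> V -> V) (I : V -> Prop) : Prop :=
  jideal mul I /\ exists x, ~ I x.

Definition sum_ideals_in_ker (mul : V -> V -> V) (d : V -> V) (x : V) : Prop :=
  exists (n : nat) (f : 'I_n -> V),
    (forall i, exists I : V -> Prop,
        [/\ jideal mul I, (forall v, I v -> d v = 0) & I (f i)]) /\
    x = \sum_(i < n) f i.

Definition jsimple (mul : V -> V -> V) : Prop :=
  (exists x : V, x != 0) /\
  forall I, jideal mul I -> (forall x, I x -> x = 0) \/ (forall x, I x).

End Jordan.

From HB Require Import structures.
From mathcomp Require Import all_boot all_order all_algebra.
From Stdlib Require Import Classical.
Set Implicit Arguments. Unset Strict Implicit.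
Import GRing.Theory.
Local Open Scope ring_scope.

(* Every proper ideal I lies in ker d.  A proper ideal contains no invertible
   element, so for x in I the element d(x^2) = d(x)x + xd(x) of I is 0.
   Differentiating again puts 2 d(x)^2 in I, hence d(x)^2 since 2 is
   invertible; if d(x) were invertible with inverse u, then d(x) = d(x)^2 u
   would be an invertible element of I.  Hence M is the largest proper ideal,
   so J/M is simple; d kills M, so it descends to J/M, and its nonzero values
   stay nonzero there because M contains no invertible element. *)

Section LinearMaps.
Variables (F : fieldType) (V W : lmodType F) (g : V -> W).
Hypothesis g_lin : forall a x y, g (a *: x + y) = a *: g x + g y.

Lemma linD x y : g (x + y) = g x + g y.
Proof. by have := g_lin 1 x y; rewrite !scale1r. Qed.

Lemma lin0 : g 0 = 0.
Proof. by apply/(addrI (g 0)); rewrite -linD !addr0. Qed.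

Lemma linZ a x : g (a *: x) = a *: g x.
Proof. by have := g_lin a x 0; rewrite !addr0 lin0 addr0. Qed.

Lemma linB x y : g (x - y) = g x - g y.
Proof. by rewrite linD -scaleN1r linZ scaleN1r. Qed.

Lemma lin_sum n (f : 'I_n -> V) : g (\sum_(i < n) f i) = \sum_(i < n) g (f i).
Proof. exact: (big_morph g linD lin0). Qed.

End LinearMaps.

Section IdealsAndDerivations.
Variables (F : fieldType) (V : lmodType F) (mul : V -> V -> V) (one : V).
Variable d : V -> V.
Hypothesis mul_bilin : bilinear_mul mul.
Hypothesis mul1l : forall x, mul one x = x.

Lemma jmulDl x y z : mul (x + y) z = mul x z + mul y z.
Proof. exact: (linD (fun a x y => mul_bilin.1 a x y z)). Qed.

Lemma jmul0l z : mul 0 z = 0.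
Proof. exact: (lin0 (fun a x y => mul_bilin.1 a x y z)). Qed.

Lemma jmulDr x y z : mul z (x + y) = mul z x + mul z y.
Proof. exact: (linD (fun a x y => mul_bilin.2 a x y z)). Qed.

Lemma jmul0r z : mul z 0 = 0.
Proof. exact: (lin0 (fun a x y => mul_bilin.2 a x y z)). Qed.

Lemma jideal_symmetrized_mul I x y : jideal mul I -> I x -> I (mul y x + mul x y).
Proof.
by move=> [_ ID _ IM] Ix; apply: ID; [exact: (IM _ _ Ix).2 | exact: (IM _ _ Ix).1].
Qed.

Lemma proper_ideal_noninvertible I z :
  jproper_ideal mul I -> jinvertible mul one z -> ~ I z.
Proof.
move=> [[_ _ _ IM] [x notIx]] [u [zu1 _]] Iz; apply: notIx.
by rewrite -(mul1l x) -zu1; exact: (IM _ _ (IM _ _ Iz).1).1.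
Qed.

Let M := sum_ideals_in_ker mul d.

Lemma sum_ideals_in_ker0 : M 0.
Proof. by exists 0%N, (fun _ => 0); split; [case | rewrite big_ord0]. Qed.

Lemma sum_ideals_in_kerD x y : M x -> M y -> M (x + y).
Proof.
move=> [n [f [Hf ->]]] [m [g [Hg ->]]].
exists (n + m)%N, (fun k => match split k with inl i => f i | inr j => g j end).
split.
  by move=> k; case: (split k).
by rewrite big_split_ord; congr (_ + _); apply: eq_bigr => i _;
  rewrite ?(unsplitK (inl _)) ?(unsplitK (inr _)).
Qed.

Lemma sum_ideals_in_ker_stable (h : V -> V) x :
  (forall x y, h (x + y) = h x + h y) -> h 0 = 0 ->
  (forall I y, jideal mul I -> I y -> I (h y)) -> M x -> M (h x).
Proof.
move=> hD h0 hI [n [f [Hf ->]]]; exists n, (h \o f); split.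
  by move=> i; have [I [idI kerI If]] := Hf i; exists I; split; last exact: hI.
exact: (big_morph h hD h0).
Qed.

Lemma sum_ideals_in_ker_ideal : jideal mul M.
Proof.
split=> [||a x|x y Mx]; first exact: sum_ideals_in_ker0.
- exact: sum_ideals_in_kerD.
- apply: (sum_ideals_in_ker_stable (h := fun v => a *: v)) => //.
  + exact: scalerDr.
  + exact: scaler0.
  + by move=> I z [_ _ IZ _]; exact: IZ.
- split.
  + apply: (sum_ideals_in_ker_stable (h := mul^~ y)) => //.
    * by move=> u v; exact: jmulDl.
    * exact: jmul0l.
    * by move=> I z [_ _ _ IM] /(IM _ y) [].
  + apply: (sum_ideals_in_ker_stable (h := mul y)) => //.
    * by move=> u v; exact: jmulDr.
    * exact: jmul0r.
    * by move=> I z [_ _ _ IM] /(IM _ y) [].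
Qed.

Lemma ideal_sub_sum_ideals_in_ker I x :
  jideal mul I -> (forall v, I v -> d v = 0) -> I x -> M x.
Proof.
by move=> idI kerI Ix; exists 1%N, (fun _ => x); split; [exists I | rewrite big_ord1].
Qed.

Hypothesis d_der : jderivation mul d.

Lemma sum_ideals_in_ker_sub_ker x : M x -> d x = 0.
Proof.
move=> [n [f [Hf ->]]]; rewrite (lin_sum d_der.1); apply: big1 => i _.
by have [I [_ kerI If]] := Hf i; exact: kerI.
Qed.

Hypothesis two_neq0 : (2%:R : F) != 0.

Lemma ideal_dsqr I x :
  jideal mul I -> I x -> d (mul x x) = 0 -> I (mul (d x) (d x)).
Proof.
move=> idI Ix dxx0; have [_ _ IZ _] := idI.
have [dlin dmul] := d_der; set v := mul (d x) (d x).
have Iddx := jideal_symmetrized_mul (d (d x)) idI Ix.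
have twice_v : v + v = - (mul (d (d x)) x + mul x (d (d x))).
  have := congr1 d dxx0; rewrite (lin0 dlin) dmul (linD dlin) !dmul => e.
  by apply/eqP; rewrite -addr_eq0 addrC -e addrACA [mul x _ + _]addrC.
have -> : v = (2%:R^-1 : F) *: (v + v).
  by rewrite -mulr2n -scaler_nat scalerA mulVf // scale1r.
by apply: (IZ); rewrite twice_v -scaleN1r; exact: IZ Iddx.
Qed.

Hypothesis d_inv : forall x, jinvertible mul one (d x) \/ d x = 0.

Lemma proper_ideal_d_val I z : jproper_ideal mul I -> I (d z) -> d z = 0.
Proof.
by move=> propI Idz; case: (d_inv z) => // /(proper_ideal_noninvertible propI).
Qed.

Lemma proper_ideal_sub_ker I x : jproper_ideal mul I -> I x -> d x = 0.
Proof.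
move=> propI Ix; have [[_ _ _ IM] _] := propI.
have dxx0 : d (mul x x) = 0.
  apply: (proper_ideal_d_val propI); rewrite d_der.2.
  exact: jideal_symmetrized_mul propI.1 Ix.
have Idx2 := ideal_dsqr propI.1 Ix dxx0.
case: (d_inv x) => // dx_inv; have [u [_ dx2u]] := dx_inv.
have Idx : I (d x) by rewrite -dx2u; exact: (IM _ u Idx2).1.
by case: (proper_ideal_noninvertible propI dx_inv Idx).
Qed.

Lemma proper_ideal_sub_sum_ideals_in_ker I x : jproper_ideal mul I -> I x -> M x.
Proof.
move=> propI; apply: ideal_sub_sum_ideals_in_ker propI.1 _.
by move=> v; exact: proper_ideal_sub_ker.
Qed.

Lemma sum_ideals_in_ker_proper : (exists x, d x != 0) -> jproper_ideal mul M.
Proof.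
move=> [x dx_neq0]; split; first exact: sum_ideals_in_ker_ideal.
by exists x => /sum_ideals_in_ker_sub_ker dx0; rewrite dx0 eqxx in dx_neq0.
Qed.

End IdealsAndDerivations.

Section SurjectiveImage.
Variables (F : fieldType) (V Q : lmodType F).
Variables (mul : V -> V -> V) (one : V) (mulQ : Q -> Q -> Q) (oneQ : Q).
Variable pi : V -> Q.
Hypothesis pi_lin : forall a x y, pi (a *: x + y) = a *: pi x + pi y.
Hypothesis pi_mul : forall x y, pi (mul x y) = mulQ (pi x) (pi y).
Hypothesis pi_one : pi one = oneQ.
Hypothesis pi_surj : forall q, exists x, pi x = q.

Lemma unital_jordan_algebra_image :
  unital_jordan_algebra mul one -> unital_jordan_algebra mulQ oneQ.
Proof.
move=> [[Hl Hr] Hc Hj H1l H1r]; split.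
- split=> a p q r; have [x <-] := pi_surj p; have [y <-] := pi_surj q;
  have [z <-] := pi_surj r; by rewrite -pi_lin -!pi_mul ?Hl ?Hr pi_lin.
- by move=> p q; have [x <-] := pi_surj p; have [y <-] := pi_surj q;
    rewrite -!pi_mul Hc.
- move=> p q; have [x <-] := pi_surj p; have [y <-] := pi_surj q.
  by rewrite /assoc_jordan -!pi_mul -(linB pi_lin) -(lin0 pi_lin) -(Hj x y).
- by move=> p; have [x <-] := pi_surj p; rewrite -pi_one -pi_mul H1l.
- by move=> p; have [x <-] := pi_surj p; rewrite -pi_one -pi_mul H1r.
Qed.

Lemma induced_map_exists (h : V -> V) :
  (forall x y, pi x = pi y -> pi (h x) = pi (h y)) ->
  exists hbar : Q -> Q, forall x, hbar (pi x) = pi (h x).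
Proof.
move=> h_compat.
have pi_surjb q : exists x, pi x == q by have [x <-] := pi_surj q; exists x.
exists (fun q => pi (h (xchoose (pi_surjb q)))) => x.
by apply: h_compat; apply/eqP; exact: (xchooseP (pi_surjb (pi x))).
Qed.

Lemma DIV_image d dbar :
  (forall x, dbar (pi x) = pi (d x)) ->
  (forall x, jinvertible mul one x -> pi x != 0) ->
  DIV mul one d -> DIV mulQ oneQ dbar.
Proof.
move=> dbarE pi_inv [[dlin dmul] [x0 dx0_neq0] d_inv]; split.
- split=> [a p q | p q]; have [x <-] := pi_surj p; have [y <-] := pi_surj q.
    by rewrite -pi_lin !dbarE dlin pi_lin.
  by rewrite -pi_mul !dbarE dmul (linD pi_lin) !pi_mul.
- exists (pi x0); rewrite dbarE.
  by case: (d_inv x0) => [/pi_inv // | dx0]; rewrite dx0 eqxx in dx0_neq0.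
- move=> p; have [x <-] := pi_surj p; rewrite dbarE.
  case: (d_inv x) => [[u [du1 dxxu]] | ->]; last by right; rewrite (lin0 pi_lin).
  by left; exists (pi u); rewrite -!pi_mul du1 dxxu pi_one.
Qed.

Lemma jideal_preimage I : jideal mulQ I -> jideal mul (fun x => I (pi x)).
Proof.
move=> [I0 ID IZ IM]; split=> [|x y Ix Iy|a x Ix|x y Ix].
- by rewrite (lin0 pi_lin).
- by rewrite (linD pi_lin); exact: ID.
- by rewrite (linZ pi_lin); exact: IZ.
- by rewrite !pi_mul; exact: IM.
Qed.

Lemma jsimple_image K :
  jproper_ideal mul K -> (forall I, jproper_ideal mul I -> forall x, I x -> K x) ->
  (forall x, pi x = 0 <-> K x) -> jsimple mulQ.
Proof.
move=> [_ [y notKy]] K_max pi_ker; split.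
  by exists (pi y); apply/eqP => /pi_ker.
move=> I /jideal_preimage idI.
have [[x notIx] | all_I] := classic (exists x, ~ I (pi x)).
  left=> q; have [z <-] := pi_surj q => Iz; apply/pi_ker.
  by apply: (K_max (fun v => I (pi v)) _ z Iz); split; last exists x.
by right=> q; have [z <-] := pi_surj q; apply: NNPP => notIz; apply: all_I; exists z.
Qed.

End SurjectiveImage.

Theorem mainTheorem4 (F : fieldType) (V : lmodType F)
  (mul : V -> V -> V) (one : V) (d : V -> V) :
  char_not_2_3 F ->
  unital_jordan_algebra mul one ->
  DIV mul one d ->
  let M := sum_ideals_in_ker mul d in
  [/\ jproper_ideal mul M,
      (forall I, jproper_ideal mul I -> forall x, I x -> M x) &
      forall (Q : lmodType F) (mulQ : Q -> Q -> Q) (oneQ : Q) (pi : V -> Q),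
        (forall (a : F) (x y : V), pi (a *: x + y) = a *: pi x + pi y) ->
        (forall x y, pi (mul x y) = mulQ (pi x) (pi y)) ->
        pi one = oneQ ->
        (forall q, exists x, pi x = q) ->
        (forall x, pi x = 0 <-> M x) ->
        exists dbar : Q -> Q,
          [/\ (forall x, dbar (pi x) = pi (d x)),
              unital_jordan_algebra mulQ oneQ,
              DIV mulQ oneQ dbar &
              jsimple mulQ]].
Proof.
move=> [two_neq0 _] J_alg J_div M; have [mul_bilin _ _ mul1l _] := J_alg.
have [d_der d_nonzero d_inv] := J_div.
have M_proper : jproper_ideal mul M := sum_ideals_in_ker_proper mul_bilin d_der d_nonzero.
have M_max I : jproper_ideal mul I -> forall x, I x -> M x.
  by move=> propI x; exact: proper_ideal_sub_sum_ideals_in_ker propI.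
split=> // Q mulQ oneQ pi pi_lin pi_mul pi_one pi_surj pi_ker.
have [dbar dbarE] : exists dbar : Q -> Q, forall x, dbar (pi x) = pi (d x).
  apply: (induced_map_exists pi_surj) => x y pi_xy; congr pi; apply/eqP.
  rewrite -subr_eq0 -(linB d_der.1); apply/eqP/(sum_ideals_in_ker_sub_ker d_der).
  by apply/pi_ker; rewrite (linB pi_lin) pi_xy subrr.
exists dbar; split=> //.
- exact: unital_jordan_algebra_image pi_lin pi_mul pi_one pi_surj J_alg.
- apply: (DIV_image pi_lin pi_mul pi_one pi_surj dbarE _ J_div) => x x_inv.
  by apply/eqP => /pi_ker; exact/(proper_ideal_noninvertible mul1l M_proper x_inv).
- exact: (jsimple_image pi_lin pi_mul pi_surj M_proper M_max pi_ker).
Qed.
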